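(* Let $H=\{0,1,2,3,4\}$ and $\mathcal R=\{(0,0,0),(0,1,1),(1,0,2),(1,0,3),(1,1,4)\}\subseteq H^3$, and let $\mathcal H=(H;\mathcal R,C_0,C_1,C_2,C_3,C_4)$ where $C_a=\{a\}$. Then $\mathcal H$ is $2$-rigid and has a Mal'tsev polymorphism (hence is strongly rectangular), but $\mathcal H$ is not strongly $2$-rectangular: the relation defined by $\exists^{\equiv2}z\,\mathcal R(x,y,z)$ equals $\{(0,0),(0,1),(1,1)\}$, which is not rectangular.
   Context: $\exists^{\equiv2}z\,\Psi(z)$ holds iff the number of $z$ satisfying $\Psi$ is odd. A Mal'tsev polymorphism is $f:H^3\to H$ with $f(a,a,b)=f(b,a,a)=b$ for all $a,b$, preserving every relation coordinatewise. Strongly rectangular: every pp-definable relation (defined from the relations using conjunction, equality and ordinary existential quantification) of arity $\ge2$ is rectangular; strongly $2$-rectangular: every relation of arity $\ge 2$ definable with $2$-modular quantifiers $\exists^{\equiv2}$ in place of $\exists$ is rectangular. A binary relation is rectangular if $(a,c),(a,d),(b,c)\in\mathcal R$ implies $(b,d)\in\mathcal R$; higher-arity rectangularity means this holds for every split of the coordinates into two nonempty parts. $2$-rigid: no automorphism of order 2. *)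

From mathcomp Require Import all_boot.
Set Implicit Arguments. Unset Strict Implicit. Unset Printing Implicit Defensive.

Definition H := 'I_5.

Definition Rrel (x y z : H) : bool :=
  (val x, val y, val z) \in [:: (0,0,0); (0,1,1); (1,0,2); (1,0,3); (1,1,4)].

Definition Crel (a x : H) : bool := x == a.

Definition automorphism (g : H -> H) : Prop :=
  bijective g /\
  (forall x y z, Rrel x y z = Rrel (g x) (g y) (g z)) /\
  (forall a x, Crel a x = Crel a (g x)).

Definition two_rigid : Prop :=
  ~ exists g : H -> H, automorphism g /\ (forall x, g (g x) = x) /\ exists x, g x != x.

Definition polymorphism3 (f : H -> H -> H -> H) : Prop :=
  (forall x1 y1 z1 x2 y2 z2 x3 y3 z3,
      Rrel x1 y1 z1 -> Rrel x2 y2 z2 -> Rrel x3 y3 z3 ->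
      Rrel (f x1 x2 x3) (f y1 y2 y3) (f z1 z2 z3)) /\
  (forall a x1 x2 x3, Crel a x1 -> Crel a x2 -> Crel a x3 -> Crel a (f x1 x2 x3)).

Definition maltsev (f : H -> H -> H -> H) : Prop :=
  (forall a b, f a a b = b /\ f b a a = b) /\ polymorphism3 f.

Inductive form : Type :=
  | FR  : nat -> nat -> nat -> form
  | FC  : H -> nat -> form
  | FEq : nat -> nat -> form
  | FAnd : form -> form -> form
  | FEx  : nat -> form -> form
  | FEx2 : nat -> form -> form.     (* exists^{=2}: odd number of witnesses *)

Definition upd (e : nat -> H) (x : nat) (h : H) : nat -> H :=
  fun y => if y == x then h else e y.

Fixpoint sat (p : form) (e : nat -> H) : bool :=
  match p with
  | FR x y z => Rrel (e x) (e y) (e z)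
  | FC a x => Crel a (e x)
  | FEq x y => e x == e y
  | FAnd p q => sat p e && sat q e
  | FEx x p => [exists h : H, sat p (upd e x h)]
  | FEx2 x p => odd #|[set h : H | sat p (upd e x h)]|
  end.

Fixpoint fv (p : form) : seq nat :=
  match p with
  | FR x y z => [:: x; y; z]
  | FC _ x => [:: x]
  | FEq x y => [:: x; y]
  | FAnd p q => fv p ++ fv q
  | FEx x p => filter (fun y => y != x) (fv p)
  | FEx2 x p => filter (fun y => y != x) (fv p)
  end.

Fixpoint no_ex (p : form) : bool :=
  match p with
  | FAnd p q => no_ex p && no_ex q
  | FEx _ _ => false
  | FEx2 _ p => no_ex p
  | _ => true
  end.

Fixpoint no_ex2 (p : form) : bool :=
  match p with
  | FAnd p q => no_ex2 p && no_ex2 q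
  | FEx _ p => no_ex2 p
  | FEx2 _ _ => false
  | _ => true
  end.

Definition defines (n : nat) (p : form) (v : n.-tuple nat)
    (Rel : ('I_n -> H) -> Prop) : Prop :=
  uniq v /\ {subset fv p <= v} /\
  forall (t : 'I_n -> H) (e : nat -> H),
    (forall i, e (tnth v i) = t i) -> (Rel t <-> sat p e).

Definition pp_definable (n : nat) (Rel : ('I_n -> H) -> Prop) : Prop :=
  exists p v, no_ex2 p /\ defines p v Rel.

Definition mod2_definable (n : nat) (Rel : ('I_n -> H) -> Prop) : Prop :=
  exists p v, no_ex p /\ defines p v Rel.

Definition mix (n : nat) (S : {set 'I_n}) (t t' : 'I_n -> H) : 'I_n -> H :=
  fun i => if i \in S then t i else t' i.

Definition rectangular (n : nat) (Rel : ('I_n -> H) -> Prop) : Prop :=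
  forall S : {set 'I_n}, S != set0 -> S != setT ->
  forall a b c d : 'I_n -> H,
    Rel (mix S a c) -> Rel (mix S a d) -> Rel (mix S b c) -> Rel (mix S b d).

Definition strongly_rectangular : Prop :=
  forall n, 2 <= n -> forall Rel, pp_definable Rel -> @rectangular n Rel.

Definition strongly_2_rectangular : Prop :=
  forall n, 2 <= n -> forall Rel, mod2_definable Rel -> @rectangular n Rel.

Definition S2 (t : 'I_2 -> H) : Prop :=
  odd #|[set z : H | Rrel (t ord0) (t (@Ordinal 2 1 isT)) z]|.

From mathcomp Require Import all_boot.

Set Implicit Arguments.
Unset Strict Implicit.
Unset Printing Implicit Defensive.

(* Sending z to the unique (x, y) with R(x, y, z) gives a surjection
   pr : H -> (Z/2)^2 whose only nontrivial fibre is {2, 3} over (1, 0), and R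
   is the graph of pr.  Hence the operation returning c if a = b, a if b = c,
   and otherwise a fixed preimage of pr a + pr b + pr c is a Mal'tsev
   polymorphism; Mal'tsev polymorphisms preserve pp-definable relations and
   force them to be rectangular.  The mod-2 quantifier is not preserved: the
   even fibre {2, 3} makes (1, 0) drop out of the projection of R counted
   modulo 2.  The constants C_a pin every automorphism to the identity. *)

Ltac case_H x := case: x => [[|[|[|[|[|?]]]]] ?] //.

Definition pr (z : H) : bool * bool :=
  (2 <= val z, (val z == 1) || (val z == 4)).

Definition sect (u : bool * bool) : H :=
  match u with
  | (false, false) => @Ordinal 5 0 isT
  | (false, true) => @Ordinal 5 1 isT
  | (true, false) => @Ordinal 5 2 isT
  | (true, true) => @Ordinal 5 4 isT
  end.

Definition bit (b : bool) : H := sect (false, b).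

Definition addp (u v : bool * bool) : bool * bool := (u.1 (+) v.1, u.2 (+) v.2).

Definition malt (a b c : H) : H :=
  if a == b then c else if b == c then a else sect (addp (addp (pr a) (pr b)) (pr c)).

Lemma Rrel_graph x y z : Rrel x y z = (x == bit (pr z).1) && (y == bit (pr z).2).
Proof. by case_H x; case_H y; case_H z. Qed.

Lemma pr_sect u : pr (sect u) = u.
Proof. by case: u => [[] []]. Qed.

Lemma addpA : associative addp.
Proof. by move=> u v w; rewrite /addp /= !addbA. Qed.

Lemma addpC : commutative addp.
Proof. by move=> u v; rewrite /addp addbC [u.2 (+) _]addbC. Qed.

Lemma addpp u : addp u u = (false, false).
Proof. by rewrite /addp !addbb. Qed.

Lemma addp0 u : addp u (false, false) = u.
Proof. by case: u => [] [] []. Qed.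

Lemma pr_malt a b c : pr (malt a b c) = addp (addp (pr a) (pr b)) (pr c).
Proof.
rewrite /malt; case: eqP => [<-|_]; first by rewrite addpp addpC addp0.
case: eqP => [<-|_]; last exact: pr_sect.
by rewrite -addpA addpp addp0.
Qed.

Lemma malt_bit a b c : malt (bit a) (bit b) (bit c) = bit (a (+) b (+) c).
Proof. by case: a; case: b; case: c. Qed.

Lemma maltsev_malt : maltsev malt.
Proof.
split; first by move=> a b; rewrite /malt eqxx; case: eqP.
split=> [x1 y1 z1 x2 y2 z2 x3 y3 z3 | a x1 x2 x3].
  rewrite !Rrel_graph pr_malt.
  move=> /andP[/eqP-> /eqP->] /andP[/eqP-> /eqP->] /andP[/eqP-> /eqP->].
  by rewrite !malt_bit !eqxx.
by rewrite /Crel => /eqP-> /eqP-> /eqP->; rewrite /malt eqxx.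
Qed.

Lemma eq_sat p e e' : e =1 e' -> sat p e = sat p e'.
Proof.
elim: p e e' => [x y z|a x|x y|p IHp q IHq|x p IHp|x p IHp] e e' ee' /=.
- by rewrite !ee'.
- by rewrite ee'.
- by rewrite !ee'.
- by rewrite (IHp e e') // (IHq e e').
- by apply: eq_existsb => h; apply: IHp => v; rewrite /upd ee'.
- congr (odd _); apply: eq_card => h; rewrite !inE.
  by apply: IHp => v; rewrite /upd ee'.
Qed.

Definition tuple_env n (v : n.-tuple nat) (t : 'I_n -> H) (x : nat) : H :=
  if insub (index x v) is Some i then t i else ord0.

Lemma tuple_env_tnth n (v : n.-tuple nat) t i :
  uniq v -> tuple_env v t (tnth v i) = t i.
Proof.
move=> uv; have idx : index (tnth v i) v = i.
  by rewrite (tnth_nth 0) index_uniq // size_tuple.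
by rewrite /tuple_env idx valK.
Qed.

Section Polymorphism.

Variable f : H -> H -> H -> H.
Hypothesis f_pol : polymorphism3 f.

Lemma sat_polymorphism3 p e1 e2 e3 : no_ex2 p ->
  sat p e1 -> sat p e2 -> sat p e3 -> sat p (fun v => f (e1 v) (e2 v) (e3 v)).
Proof.
have [fR fC] := f_pol.
elim: p e1 e2 e3 => [x y z|a x|x y|p IHp q IHq|x p IHp|//] e1 e2 e3 /=.
- by move=> _; apply: fR.
- by move=> _; apply: fC.
- by move=> _ /eqP-> /eqP-> /eqP->.
- move=> /andP[np nq] /andP[? ?] /andP[? ?] /andP[? ?].
  by apply/andP; split; [apply: IHp | apply: IHq].
- move=> np /existsP[h1 s1] /existsP[h2 s2] /existsP[h3 s3].
  apply/existsP; exists (f h1 h2 h3).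
  rewrite (@eq_sat _ _ (fun v => f (upd e1 x h1 v) (upd e2 x h2 v) (upd e3 x h3 v))).
    exact: IHp.
  by move=> v; rewrite /upd; case: eqP.
Qed.

Lemma pp_definable_closed n (Rel : ('I_n -> H) -> Prop) t1 t2 t3 t :
  pp_definable Rel -> Rel t1 -> Rel t2 -> Rel t3 ->
  (forall i, t i = f (t1 i) (t2 i) (t3 i)) -> Rel t.
Proof.
move=> [p [v [np [uv [_ defp]]]]] R1 R2 R3 tE.
have def t' : Rel t' <-> sat p (tuple_env v t').
  by apply: defp => i; rewrite tuple_env_tnth.
apply/(defp _ (fun x => f (tuple_env v t1 x) (tuple_env v t2 x) (tuple_env v t3 x))).
  by move=> i; rewrite !tuple_env_tnth.
by apply: sat_polymorphism3 => //; apply/def.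
Qed.

End Polymorphism.

Lemma maltsev_rectangular f n (Rel : ('I_n -> H) -> Prop) :
  maltsev f -> pp_definable Rel -> rectangular Rel.
Proof.
move=> [fM fpol] ppRel S _ _ a b c d Rac Rad Rbc.
apply: (pp_definable_closed fpol ppRel Rbc Rac Rad) => i; rewrite /mix.
by case: (i \in S); [case: (fM (a i) (b i)) | case: (fM (c i) (d i))].
Qed.

Lemma automorphism_id g : automorphism g -> g =1 id.
Proof. by move=> [_ [_ gC]] x; have := gC x x; rewrite /Crel eqxx => /esym/eqP. Qed.

Lemma two_rigid_H : two_rigid.
Proof. by move=> [g [/automorphism_id gid [_ [x]]]]; rewrite gid eqxx. Qed.

Lemma odd_card_Rrel (x y : H) :
  odd #|[set z : H | Rrel x y z]| = ((val x, val y) \in [:: (0,0); (0,1); (1,1)]).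
Proof.
rewrite cardsE -sum1_card big_mkcond !big_ord_recl big_ord0.
by case_H x; case_H y.
Qed.

Lemma S2_mod2_definable : mod2_definable S2.
Proof.
exists (FEx2 2 (FR 0 1 2)), [tuple 0; 1]; split=> //; split=> //.
split=> [w|t e et]; first by rewrite /= !inE.
by rewrite /S2 /= -(et ord0) -(et (@Ordinal 2 1 isT)).
Qed.

Lemma S2_not_rectangular : ~ rectangular S2.
Proof.
pose S : {set 'I_2} := [set ord0].
have S_neq0 : S != set0 by apply/set0Pn; exists ord0; rewrite inE.
have S_neqT : S != setT.
  by apply/negP => /eqP ST; have := in_setT (@Ordinal 2 1 isT); rewrite -ST inE.
pose k (b : bool) : 'I_2 -> H := fun _ => bit b.
move=> /(_ S S_neq0 S_neqT (k false) (k true) (k true) (k false)).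
by rewrite /S2 !odd_card_Rrel /mix !inE => /(_ isT isT isT).
Qed.

Theorem mainTheorem14 :
  two_rigid /\
  (exists f, maltsev f) /\
  strongly_rectangular /\
  ~ strongly_2_rectangular /\
  mod2_definable S2 /\
  (forall x y : H,
      odd #|[set z : H | Rrel x y z]| = ((val x, val y) \in [:: (0,0); (0,1); (1,1)])) /\
  ~ rectangular S2.
Proof.
split; first exact: two_rigid_H.
split; first by exists malt; exact: maltsev_malt.
split; first by move=> n _ Rel; exact: maltsev_rectangular maltsev_malt.
split; first by move=> rect2; apply: S2_not_rectangular; exact: rect2 S2_mod2_definable.
split; first exact: S2_mod2_definable.
split; first exact: odd_card_Rrel.
exact: S2_not_rectangular.
Qed.
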